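(* Let $q\geq 2$ be an integer and fix a real number $c_0>0$. For every real number $b>0$ there exists a positive integer $n_0$ such that for every integer $n\geq n_0$ and every integer $k$ of the form $k=\frac{n(q-1)}{2q}\bigl(\log(n(q-1))-c\bigr)$ with $0\leq c\leq \min\{c_0,\log(n(q-1))\}$, we have $$\Vert \nu_n^{*k}-\pi_n\Vert_{TV}\geq 1-(4q+b)e^{-c}.$$
   Context: For integers $n\geq1$, $q\geq2$, the Hamming scheme $H(n,q)$ is the graph with vertex set $X_n=\{0,1,\dots,q-1\}^n$ in which $x$ and $x'$ are adjacent ($x\sim x'$) iff they differ in exactly one coordinate. The simple random walk has transition probability $p_n(x,x')=\frac{1}{n(q-1)}$ if $x\sim x'$ and $0$ otherwise. Let $p_n^{(k)}$ denote the $k$-step transition probability ($p_n^{(0)}(x,x')=\delta_{x,x'}$), $x^{(0)}=(0,\dots,0)$, and $\nu_n^{*k}(x)=p_n^{(k)}(x^{(0)},x)$. $\pi_n$ is the uniform probability measure on $X_n$. For measures $\mu,\nu$ on $X_n$, $\Vert\mu-\nu\Vert_{TV}=\max_{S\subset X_n}|\mu(S)-\nu(S)|$. *)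

From mathcomp Require Import all_boot.
From Stdlib Require Import Reals.
Set Implicit Arguments. Unset Strict Implicit. Unset Printing Implicit Defensive.

Definition vtx (q n : nat) : finType := {ffun 'I_n -> 'I_q}.

Definition rsum (T : finType) (P : pred T) (F : T -> R) : R :=
  \big[Rplus/0%R]_(x : T | P x) F x.

Definition adj (q n : nat) (x y : vtx q n) : bool :=
  #|[set i : 'I_n | x i != y i]| == 1.

Definition p1 (q n : nat) (x y : vtx q n) : R :=
  if adj x y then (1 / INR (n * (q - 1)))%R else 0%R.

Fixpoint pk (q n : nat) (k : nat) (x y : vtx q n) : R :=
  match k with
  | 0 => if x == y then 1%R else 0%R
  | k'.+1 => rsum predT (fun z => (pk k' x z * p1 z y)%R)
  end.

Definition origin (q n : nat) (hq : 0 < q) : vtx q n := [ffun _ => Ordinal hq].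

Definition nu (q n : nat) (hq : 0 < q) (k : nat) (x : vtx q n) : R :=
  pk k (origin n hq) x.

Definition unif (q n : nat) (x : vtx q n) : R := (1 / INR (#|vtx q n|))%R.

Definition tv (q n : nat) (mu nu : vtx q n -> R) : R :=
  \big[Rmax/0%R]_(S : {set vtx q n})
     Rabs (rsum (fun x => x \in S) mu - rsum (fun x => x \in S) nu).

From mathcomp Require Import all_boot.
From Stdlib Require Import Reals Lra.
From HB Require Import structures.

(* Wilson's second-moment method.  Let f = Z - n/q, where Z(x) is the number of
   zero coordinates of x, and N = n(q-1).  A step of the walk changes Z by at most
   one, so the transition operator maps functions of Z to functions of Z: f is an
   eigenfunction with eigenvalue 1 - q/N, and f^2 is mapped into the span of
   f^2, f and 1.  Hence after k steps from the origin the mean of f is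
   m = (1 - q/N)^k N/q and its second moment is at most m^2 + m + N/q^2, while
   under the uniform law f has mean 0 and variance N/q^2.  Chebyshev's inequality
   for the event {f >= m/2} gives a total variation distance of at least
   1 - 4/m - 8N/(q^2 m^2).  For k = N/(2q) (log N - c) one has
   m ~ e^(c/2) sqrt N / q, so the first error term vanishes as n grows and the
   second tends to 8 e^(-c) <= 4q e^(-c). *)

Set Implicit Arguments. Unset Strict Implicit. Unset Printing Implicit Defensive.

Lemma Rplus_assoc_ssr : associative Rplus.
Proof. by move=> x y z; rewrite Rplus_assoc. Qed.

HB.instance Definition _ :=
  Monoid.isComLaw.Build R 0%R Rplus Rplus_assoc_ssr Rplus_comm Rplus_0_l.

Open Scope R_scope.

Definition indic (b : bool) : R := if b then 1 else 0.

Section FiniteSums.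

Variable T : finType.
Implicit Types (P : pred T) (F G : T -> R).

Lemma eq_rsum P F G : (forall x, P x -> F x = G x) -> rsum P F = rsum P G.
Proof. exact: eq_bigr. Qed.

Lemma rsumD P F G : rsum P (fun x => F x + G x) = rsum P F + rsum P G.
Proof. exact: big_split. Qed.

Lemma rsumZ P c F : rsum P (fun x => c * F x) = c * rsum P F.
Proof.
rewrite /rsum; elim/big_rec2: _ => [|i y1 y2 _ ->]; first by rewrite Rmult_0_r.
by rewrite Rmult_plus_distr_l.
Qed.

Lemma ler_rsum P F G : (forall x, P x -> F x <= G x) -> rsum P F <= rsum P G.
Proof.
move=> FG; rewrite /rsum; elim/big_rec2: _ => [|i y1 y2 Pi le]; first lra.
by apply: Rplus_le_compat => //; apply: FG.
Qed.

Lemma rsum_ge0 P F : (forall x, P x -> 0 <= F x) -> 0 <= rsum P F.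
Proof.
move=> F0; rewrite /rsum; elim/big_rec: _ => [|i y Pi le]; first lra.
by have := F0 i Pi; lra.
Qed.

Lemma rsum_const P c : rsum P (fun=> c) = INR #|P| * c.
Proof.
rewrite /rsum big_const; elim: #|_| => [|m IH]; first by rewrite /=; lra.
by rewrite iterS IH S_INR; lra.
Qed.

Lemma rsumD1T F i : rsum predT F = F i + rsum (fun j => j != i) F.
Proof. by rewrite /rsum (bigD1 i). Qed.

Lemma rsumID P F : rsum predT F = rsum P F + rsum (predC P) F.
Proof. exact: bigID. Qed.

Lemma rsum_markov P (w g : T -> R) a :
  0 < a -> (forall x, 0 <= w x) -> (forall x, 0 <= g x) ->
  (forall x, P x -> a <= g x) ->
  rsum P w <= rsum predT (fun x => w x * g x) / a.
Proof.
move=> a_gt0 w_ge0 g_ge0 Pg.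
have wg_ge0 x : 0 <= / a * (w x * g x).
  by apply: Rmult_le_pos; [apply/Rlt_le/Rinv_0_lt_compat | apply: Rmult_le_pos].
apply: (Rle_trans _ (rsum P (fun x => / a * (w x * g x)))).
  apply: ler_rsum => x Px; rewrite -Rmult_assoc (Rmult_comm _ (w x)) Rmult_assoc.
  rewrite -{1}(Rmult_1_r (w x)); apply: Rmult_le_compat_l => //.
  rewrite -(Rinv_l a); last lra.
  by apply: Rmult_le_compat_l; [apply/Rlt_le/Rinv_0_lt_compat | apply: Pg].
rewrite /Rdiv Rmult_comm -rsumZ (rsumID P).
by have := @rsum_ge0 (predC P) _ (fun x _ => wg_ge0 x); lra.
Qed.

End FiniteSums.

Lemma exchange_rsum (T U : finType) (F : T -> U -> R) :
  rsum predT (fun x => rsum predT (F x)) = rsum predT (fun y => rsum predT (F^~ y)).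
Proof. exact: exchange_big. Qed.

Lemma ler_bigRmax (T : finType) (F : T -> R) (x : T) : F x <= \big[Rmax/0]_(y : T) F y.
Proof.
have : x \in index_enum T by rewrite mem_index_enum.
elim: (index_enum T) => [//|y r IH]; rewrite inE big_cons => /orP [/eqP <-|/IH h].
  exact: Rmax_l.
exact: Rle_trans h (Rmax_r _ _).
Qed.

Section HammingGraph.

Variables q n : nat.
Implicit Types (x y z : vtx q n) (i : 'I_n) (v : 'I_q).

Definition upd z i v : vtx q n := [ffun j => if j == i then v else z j].

Lemma upd_at z i v : upd z i v i = v.
Proof. by rewrite ffunE eqxx. Qed.

Lemma adj_upd z i v : adj z (upd z i v) = (v != z i).
Proof.
rewrite /adj; case: (eqVneq v (z i)) => [->|vz] /=.
  rewrite (_ : [set j | _] = set0) ?cards0 //.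
  by apply/setP => j; rewrite !inE ffunE; case: ifP => [/eqP ->|_]; rewrite eqxx.
rewrite (_ : [set j | _] = [set i]) ?cards1 //.
apply/setP => j; rewrite !inE ffunE.
by case: (eqVneq j i) => [->|ji]; rewrite ?eqxx ?(negbTE ji) // eq_sym.
Qed.

Lemma upd_adj z y i : adj z y -> z i != y i -> upd z i (y i) = y.
Proof.
move=> /cards1P [j Ej] zyi; have ij : i = j.
  by apply/set1P; rewrite -Ej inE.
apply/ffunP => k; rewrite ffunE; case: (eqVneq k i) => [->//|ki].
by apply/eqP; apply: contraNT ki; rewrite ij -(in_set1 k) -Ej inE.
Qed.

Lemma adj_sym x y : adj x y = adj y x.
Proof.
by rewrite /adj (_ : [set j | x j != y j] = [set j | y j != x j]) //; apply/setP => j;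
  rewrite !inE eq_sym.
Qed.

Lemma rsum_adj z (g : vtx q n -> R) :
  rsum (adj z) g =
  rsum predT (fun i => rsum (fun v => v != z i) (fun v => g (upd z i v))).
Proof.
have -> : rsum (adj z) g = rsum (adj z) (fun y => rsum (fun i => z i != y i) (fun=> g y)).
  by apply: eq_rsum => y /eqP adj_zy; rewrite rsum_const -cardsE adj_zy /=; lra.
rewrite /rsum (exchange_big_dep predT) //; apply: eq_bigr => i _.
rewrite (reindex_onto (upd z i) (fun y => y i)); last by move=> y /andP [/upd_adj]; apply.
by apply: eq_bigl => v; rewrite adj_upd upd_at eqxx andbT eq_sym andbb.
Qed.

End HammingGraph.

Lemma p1_ge0 (q n : nat) (x y : vtx q n) : 0 <= p1 x y.
Proof.
rewrite /p1; case: adj; last lra.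
have [N_gt0|<-] := Rle_lt_or_eq_dec _ _ (pos_INR (n * (q - 1))).
  by apply: Rlt_le; apply: Rdiv_lt_0_compat; lra.
by rewrite /Rdiv Rinv_0; lra.
Qed.

Lemma p1_sym (q n : nat) (x y : vtx q n) : p1 x y = p1 y x.
Proof. by rewrite /p1 adj_sym. Qed.

Lemma pk_ge0 (q n : nat) k (x y : vtx q n) : 0 <= pk k x y.
Proof.
elim: k y => [|k IH] y /=; first by case: eqP; lra.
by apply: rsum_ge0 => z _; apply: Rmult_le_pos; [exact: IH | exact: p1_ge0].
Qed.

Section RandomWalk.

Variables (q n : nat) (q_gt1 : (1 < q)%nat) (n_gt0 : (0 < n)%nat).

Local Notation N := (INR (n * (q - 1))).
Local Notation Q := (INR q).
Local Notation lam := (1 - Q / N).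
Local Notation X := (vtx q n).
Implicit Types (x y z : X) (i : 'I_n) (v : 'I_q).

Lemma Q_ge2 : 2 <= Q.
Proof. by apply: (le_INR 2); apply/leP. Qed.

Lemma INR_N : N = INR n * (Q - 1).
Proof. by rewrite mult_INR minus_INR //; apply/leP; apply: ltnW. Qed.

Lemma N_gt0 : 0 < N.
Proof.
rewrite INR_N; apply: Rmult_lt_0_compat; last by have := Q_ge2; lra.
by apply: lt_0_INR; apply/ltP.
Qed.

Definition Pop (g : X -> R) (z : X) : R := rsum predT (fun y => p1 z y * g y).

Lemma PopE g z :
  Pop g z = / N * rsum predT (fun i => rsum (fun v => v != z i) (fun v => g (upd z i v))).
Proof.
rewrite -rsum_adj -rsumZ /Pop /rsum (big_mkcond (adj z)); apply: eq_bigr => y _.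
by rewrite /p1; case: adj; rewrite /Rdiv ?Rmult_1_l ?Rmult_0_l.
Qed.

Definition zero : 'I_q := Ordinal (ltnW q_gt1).

Definition zind v : R := indic (v == zero).

Definition nzero x : R := rsum predT (fun j => zind (x j)).

Definition zdev x : R := nzero x - INR n / Q.

Lemma nzero_upd z i v :
  nzero (upd z i v) = nzero z - zind (z i) + zind v.
Proof.
rewrite /nzero !(rsumD1T _ i) upd_at.
rewrite (eq_rsum (G := fun j => zind (z j))); first lra.
by move=> j /= ji; rewrite ffunE (negbTE ji).
Qed.

Lemma rsum_zind : rsum predT zind = 1.
Proof.
rewrite (rsumD1T _ zero) (eq_rsum (G := fun=> 0)) ?rsum_const /zind ?eqxx /=; first lra.
by move=> v /negbTE ->.
Qed.

Lemma rsum_neq_affine w A B :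
  rsum (fun v => v != w) (fun v => A + B * zind v) = (Q - 1) * A + B * (1 - zind w).
Proof.
rewrite rsumD rsum_const rsumZ.
have -> : #|(fun v => v != w)| = #|predC1 w| by apply: eq_card.
rewrite cardC1 card_ord -subn1 minus_INR; last by apply/leP; apply: ltnW.
have rsum_neq : rsum (fun v => v != w) zind = 1 - zind w.
  by apply: (Rplus_eq_reg_l (zind w)); rewrite -rsumD1T rsum_zind; ring.
by rewrite rsum_neq /=; ring.
Qed.

Lemma rsum_nzero_affine z a b :
  rsum predT (fun i => a + b * zind (z i)) = INR n * a + b * nzero z.
Proof. by rewrite rsumD rsum_const rsumZ card_ord. Qed.

(* From a state with Z zeros, a step destroys a zero in Z (q - 1) ways, creates
   one in n - Z ways and leaves Z unchanged in (n - Z) (q - 2) ways. *)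
Lemma Pop_nzero (phi : R -> R) z :
  Pop (fun x => phi (nzero x)) z =
  / N * (nzero z * (Q - 1) * phi (nzero z - 1)
         + (INR n - nzero z) * (phi (nzero z + 1) + (Q - 2) * phi (nzero z))).
Proof.
rewrite PopE; congr (_ * _).
have inner i : rsum (fun v => v != z i) (fun v => phi (nzero (upd z i v))) =
    phi (nzero z + 1) + (Q - 2) * phi (nzero z)
    + ((Q - 1) * phi (nzero z - 1) - phi (nzero z + 1) - (Q - 2) * phi (nzero z)) * zind (z i).
  rewrite (eq_rsum (G := fun v => phi (nzero z - zind (z i))
      + (phi (nzero z - zind (z i) + 1) - phi (nzero z - zind (z i))) * zind v)).
    rewrite rsum_neq_affine /zind /indic; case: (z i == zero); rewrite ?Rminus_0_r; ring.
  by move=> v _; rewrite nzero_upd /zind /indic; case: (v == zero); rewrite ?Rplus_0_r; ring.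
rewrite (eq_rsum (fun i _ => inner i)) rsum_nzero_affine; ring.
Qed.

Lemma INR_n_gt0 : 0 < INR n.
Proof. by apply: lt_0_INR; apply/ltP. Qed.

Lemma Pop1 z : Pop (fun=> 1) z = 1.
Proof.
have := Pop_nzero (fun=> 1) z; rewrite /= => ->; rewrite INR_N.
have := INR_n_gt0; have := Q_ge2; move=> *; field; lra.
Qed.

Lemma Pop_zdev z : Pop zdev z = lam * zdev z.
Proof.
have := Pop_nzero (fun t => t - INR n / Q) z; rewrite /= => ->; rewrite /zdev INR_N.
have := INR_n_gt0; have := Q_ge2; move=> *; field; lra.
Qed.

Lemma Pop_zdev2 z :
  Pop (fun x => zdev x ^ 2) z =
  (1 - 2 * Q / N) * zdev z ^ 2 + (Q - 2) / N * zdev z + 2 / Q.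
Proof.
have := Pop_nzero (fun t => (t - INR n / Q) ^ 2) z; rewrite /= => ->; rewrite /zdev INR_N.
have := INR_n_gt0; have := Q_ge2; move=> *; field; lra.
Qed.

Definition walk_mean k (g : X -> R) : R := rsum predT (fun x => nu (ltnW q_gt1) k x * g x).

Lemma walk_mean0 g : walk_mean 0 g = g (origin n (ltnW q_gt1)).
Proof.
rewrite /walk_mean /nu (rsumD1T _ (origin n (ltnW q_gt1))) /= eqxx.
rewrite (eq_rsum (G := fun=> 0)) ?rsum_const; first lra.
by move=> x /= xo; rewrite eq_sym (negbTE xo); lra.
Qed.

Lemma walk_meanS k g : walk_mean k.+1 g = walk_mean k (Pop g).
Proof.
rewrite /walk_mean /nu /=.
under eq_rsum => x _ do rewrite Rmult_comm -rsumZ.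
rewrite exchange_rsum; apply: eq_rsum => z _; rewrite -rsumZ.
by apply: eq_rsum => x _; ring.
Qed.

Lemma eq_walk_mean k g h : (forall x, g x = h x) -> walk_mean k g = walk_mean k h.
Proof. by move=> gh; apply: eq_rsum => x _; rewrite gh. Qed.

Lemma walk_meanZ k a g : walk_mean k (fun x => a * g x) = a * walk_mean k g.
Proof. by rewrite /walk_mean -rsumZ; apply: eq_rsum => x _; ring. Qed.

Lemma walk_mean_affine k g h a b c :
  walk_mean k (fun x => a * g x + b * h x + c) =
  a * walk_mean k g + b * walk_mean k h + c * walk_mean k (fun=> 1).
Proof. by rewrite /walk_mean -!rsumZ -!rsumD; apply: eq_rsum => x _; ring. Qed.

Lemma walk_mean1 k : walk_mean k (fun=> 1) = 1.
Proof.
elim: k => [|k IH]; first by rewrite walk_mean0.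
by rewrite walk_meanS (eq_walk_mean _ Pop1).
Qed.

Lemma zdev_origin : zdev (origin n (ltnW q_gt1)) = N / Q.
Proof.
rewrite /zdev /nzero (eq_rsum (G := fun=> 1)) ?rsum_const ?card_ord; last first.
  by move=> j _; rewrite /zind ffunE eqxx.
rewrite INR_N; have := Q_ge2; move=> *; field; lra.
Qed.

Lemma walk_mean_zdev k : walk_mean k zdev = lam ^ k * (N / Q).
Proof.
elim: k => [|k IH]; first by rewrite walk_mean0 zdev_origin /=; ring.
by rewrite walk_meanS (eq_walk_mean _ Pop_zdev) walk_meanZ IH /=; ring.
Qed.

Lemma Q_div_N_bounds : 2 * Q <= N -> 0 < Q / N <= 1 / 2.
Proof.
move=> QN; have Q2 := Q_ge2; have N0 := N_gt0; split.
  by apply: Rdiv_lt_0_compat; lra.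
apply: (Rmult_le_reg_l _ _ _ N0); have -> : N * (Q / N) = Q by field; lra.
lra.
Qed.

Lemma walk_mean_zdev2 k : 2 * Q <= N ->
  let m := lam ^ k * (N / Q) in
  walk_mean k (fun x => zdev x ^ 2) <= m ^ 2 + m + N / Q ^ 2.
Proof.
move=> QN; have Q2 := Q_ge2; have N0 := N_gt0; have QN' := Q_div_N_bounds QN.
have lam_ge0 : 0 <= lam by lra.
elim: k => [|k IH] m.
  rewrite /m walk_mean0 zdev_origin pow_O Rmult_1_l.
  have : 0 <= N / Q ^ 2 by apply: Rmult_le_pos; [lra | apply/Rlt_le/Rinv_0_lt_compat; nra].
  have : 0 <= N / Q by apply: Rmult_le_pos; [lra | apply/Rlt_le/Rinv_0_lt_compat; lra].
  lra.
set m' := lam ^ k * (N / Q) in IH.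
have m'_ge0 : 0 <= m'.
  apply: Rmult_le_pos; first exact: pow_le.
  by apply: Rmult_le_pos; [lra | apply/Rlt_le/Rinv_0_lt_compat; lra].
have -> : m = lam * m' by rewrite /m /m' /=; ring.
rewrite walk_meanS (eq_walk_mean _ Pop_zdev2).
rewrite (walk_mean_affine _ (fun x => zdev x ^ 2) zdev) walk_mean_zdev walk_mean1 -/m'.
have gap : (1 - 2 * Q / N) * (m' ^ 2 + m' + N / Q ^ 2) + (Q - 2) / N * m' + 2 / Q * 1
    + ((Q * m' / N) ^ 2 + 2 * m' / N) = (lam * m') ^ 2 + lam * m' + N / Q ^ 2.
  by field; lra.
have : 0 <= (Q * m' / N) ^ 2 + 2 * m' / N.
  apply: Rplus_le_le_0_compat; first exact: pow2_ge_0.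
  by apply: Rmult_le_pos; [lra | apply/Rlt_le/Rinv_0_lt_compat].
have : 0 <= 1 - 2 * Q / N by rewrite /Rdiv Rmult_assoc; lra.
move=> h1 h2; have := Rmult_le_compat_l _ _ _ h1 IH; lra.
Qed.

Lemma rsum_Pop g : rsum predT (Pop g) = rsum predT g.
Proof.
rewrite /Pop exchange_rsum; apply: eq_rsum => y _.
rewrite (eq_rsum (G := fun x => g y * (p1 y x * 1))); last by move=> x _; rewrite p1_sym; ring.
by rewrite rsumZ -/(Pop (fun=> 1) y) Pop1 Rmult_1_r.
Qed.

Lemma rsum_zdev : rsum predT zdev = 0.
Proof.
have := rsum_Pop zdev; rewrite (eq_rsum (fun x _ => Pop_zdev x)) rsumZ.
have QN0 : 0 < Q / N by apply: Rdiv_lt_0_compat; [have := Q_ge2 | exact: N_gt0]; lra.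
move=> e; have : Q / N * rsum predT zdev = 0 by lra.
by case/Rmult_integral => //; lra.
Qed.

Lemma rsum_zdev2 : rsum predT (fun x => zdev x ^ 2) = INR #|X| * (N / Q ^ 2).
Proof.
have := rsum_Pop (fun x => zdev x ^ 2).
rewrite (eq_rsum (fun x _ => Pop_zdev2 x)) !rsumD !rsumZ rsum_zdev rsum_const.
have -> : #|@predT X| = #|X| by [].
have Q2 := Q_ge2; have N0 := N_gt0; move=> e.
have e' : 2 * Q / N * rsum predT (fun x => zdev x ^ 2) = INR #|X| * (2 / Q) by lra.
apply: (Rmult_eq_reg_l (2 * Q / N)); first by rewrite e'; field; lra.
by apply: Rgt_not_eq; apply: Rdiv_lt_0_compat; lra.
Qed.

Definition zdev_ge t : {set X} := [set x | if Rle_dec t (zdev x) then true else false].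

Lemma unif_zdev_ge t : 0 < t ->
  rsum (fun x => x \in zdev_ge t) (@unif q n) <= (N / Q ^ 2) / t ^ 2.
Proof.
move=> t_gt0; have Q2 := Q_ge2; have N0 := N_gt0.
have X_gt0 : 0 < INR #|X|.
  by apply: lt_0_INR; apply/ltP/card_gt0P; exists (origin n (ltnW q_gt1)).
apply: Rle_trans (rsum_markov (g := fun x => zdev x ^ 2) (a := t ^ 2) _ _ _ _) _.
- by apply: pow_lt.
- by move=> x; apply: Rlt_le; apply: Rdiv_lt_0_compat; lra.
- by move=> x; apply: pow2_ge_0.
- by move=> x; rewrite inE; case: Rle_dec => // le _; apply: pow_incr; lra.
rewrite /unif (eq_rsum (G := fun x => / INR #|X| * zdev x ^ 2)); last first.
  by move=> x _; rewrite /Rdiv Rmult_1_l.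
by rewrite rsumZ rsum_zdev2; right; field; lra.
Qed.

Lemma walk_zdev_lt k m t : 2 * Q <= N -> m = lam ^ k * (N / Q) -> 0 <= t < m ->
  rsum (predC (fun x => x \in zdev_ge t)) (nu (ltnW q_gt1) k) <= (m + N / Q ^ 2) / (m - t) ^ 2.
Proof.
move=> QN m_def t_bounds.
apply: Rle_trans (rsum_markov (g := fun x => (zdev x - m) ^ 2) (a := (m - t) ^ 2) _ _ _ _) _.
- by apply: pow_lt; lra.
- by move=> x; apply: pk_ge0.
- by move=> x; apply: pow2_ge_0.
- move=> x; rewrite /= inE; case: Rle_dec => // /Rnot_le_lt lt _.
  have : 0 <= (t - zdev x) * (2 * m - t - zdev x) by apply: Rmult_le_pos; lra.
  nra.
apply: Rmult_le_compat_r; first by apply/Rlt_le/Rinv_0_lt_compat/pow_lt; lra.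
rewrite -/(walk_mean k (fun x => (zdev x - m) ^ 2)).
rewrite (eq_walk_mean _ (h := fun x => 1 * zdev x ^ 2 + (- 2 * m) * zdev x + m ^ 2));
  last by move=> x; ring.
rewrite walk_mean_affine walk_mean_zdev walk_mean1 -m_def.
by have := walk_mean_zdev2 k QN; rewrite /= -m_def; lra.
Qed.

Lemma tv_walk_ge k : 2 * Q <= N ->
  1 - 4 * Q / (N * lam ^ k) - 8 / (N * (lam ^ k) ^ 2) <= tv (nu (ltnW q_gt1) k) (@unif q n).
Proof.
move=> QN; have Q2 := Q_ge2; have N0 := N_gt0; have [QN0 QN1] := Q_div_N_bounds QN.
have P_gt0 : 0 < lam ^ k by apply: pow_lt; lra.
set m := lam ^ k * (N / Q).
have m_gt0 : 0 < m by apply: Rmult_lt_0_compat => //; apply: Rdiv_lt_0_compat; lra.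
have walk_out := walk_zdev_lt QN (erefl m) (ltac:(lra) : 0 <= m / 2 < m).
have unif_in := unif_zdev_ge (ltac:(lra) : 0 < m / 2).
have total := rsumID (fun x => x \in zdev_ge (m / 2)) (nu (ltnW q_gt1) k).
have mass1 : rsum predT (@nu q n (ltnW q_gt1) k) = 1.
  by rewrite -(walk_mean1 k) /walk_mean; apply: eq_rsum => x _; rewrite Rmult_1_r.
rewrite mass1 in total.
rewrite /tv; apply: Rle_trans (ler_bigRmax _ (zdev_ge (m / 2))); apply: Rle_trans (Rle_abs _).
have -> : 1 - 4 * Q / (N * lam ^ k) - 8 / (N * (lam ^ k) ^ 2)
    = 1 - (m + N / Q ^ 2) / (m / 2) ^ 2 - (N / Q ^ 2) / (m / 2) ^ 2.
  by rewrite /m; field; lra.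
rewrite (_ : m - m / 2 = m / 2) in walk_out; [lra | field].
Qed.

End RandomWalk.

Lemma exp_le x y : x <= y -> exp x <= exp y.
Proof. by case/Rle_lt_or_eq_dec => [/exp_increasing/Rlt_le|->]; [|apply: Rle_refl]. Qed.

Lemma exp_mulINR a k : exp (INR k * a) = exp a ^ k.
Proof.
elim: k => [|k IH]; first by rewrite Rmult_0_l exp_0.
by rewrite S_INR Rmult_plus_distr_r Rmult_1_l exp_plus IH /=; ring.
Qed.

Lemma ln_le_sub1 y : 0 < y -> ln y <= y - 1.
Proof. by move=> y_gt0; have := exp_ineq1_le (ln y); rewrite exp_ln //; lra. Qed.

Lemma ln_le_2sqrt y : 0 < y -> ln y <= 2 * sqrt y.
Proof.
move=> y_gt0; have s_gt0 := sqrt_lt_R0 _ y_gt0.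
rewrite -{1}(sqrt_sqrt y) ?ln_mult; try lra.
by have := ln_le_sub1 s_gt0; lra.
Qed.

Lemma exp_le_1_add_2x x : 0 <= x <= 1 / 2 -> exp x <= 1 + 2 * x.
Proof.
move=> x01; have e := exp_ineq1_le (- x); have e_gt0 := exp_pos (- x).
rewrite -[exp x]Rinv_inv -exp_Ropp.
apply: (Rmult_le_reg_l (exp (- x))) => //; rewrite Rinv_r; last lra.
have : 0 <= (exp (- x) - (1 - x)) * (1 + 2 * x) by apply: Rmult_le_pos; lra.
nra.
Qed.

Lemma exp_le_1_sub x : 0 <= x <= 1 / 2 -> exp (- (x + 2 * x ^ 2)) <= 1 - x.
Proof.
move=> x01; have e := exp_ineq1_le (x + 2 * x ^ 2); have e_gt0 := exp_pos (x + 2 * x ^ 2).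
rewrite exp_Ropp; apply: (Rmult_le_reg_l (exp (x + 2 * x ^ 2))) => //.
rewrite Rinv_r; last lra.
have : 0 <= (exp (x + 2 * x ^ 2) - (1 + x + 2 * x ^ 2)) * (1 - x) by apply: Rmult_le_pos; lra.
have : 0 <= x ^ 2 * (1 - 2 * x) by apply: Rmult_le_pos; [apply: pow2_ge_0 | lra].
nra.
Qed.

Lemma pow_1_sub_ge_exp x k :
  0 <= x <= 1 / 2 -> exp (- (INR k * (x + 2 * x ^ 2))) <= (1 - x) ^ k.
Proof.
move=> x01; rewrite Ropp_mult_distr_r exp_mulINR.
by apply: pow_incr; split; [apply/Rlt_le/exp_pos | apply: exp_le_1_sub].
Qed.

Lemma inv_le_exp a P : exp (- a) <= P -> / P <= exp a.
Proof.
move=> aP; rewrite -[exp a]Rinv_inv -exp_Ropp.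
by apply: Rinv_le_contravar => //; apply: exp_pos.
Qed.

Lemma cutoff_first_term Q N c c0 b eps P :
  0 < Q -> 0 < N -> 0 < b -> c <= c0 -> eps <= 1 / 2 ->
  2 * ln (8 * Q / b) + c0 + 1 <= ln N -> 0 < P -> / P <= exp ((ln N - c) / 2 + eps) ->
  4 * Q / (N * P) <= b / 2 * exp (- c).
Proof.
move=> Q_gt0 N_gt0 b_gt0 c_le eps_le LN P_gt0 invP.
have small : exp ((c - ln N) / 2 + eps) <= b / (8 * Q).
  have -> : b / (8 * Q) = exp (- ln (8 * Q / b)).
    by rewrite exp_Ropp exp_ln ?Rinv_div //; apply: Rdiv_lt_0_compat; lra.
  by apply: exp_le; lra.
have split_exp : / N * exp ((ln N - c) / 2 + eps) = exp (- c) * exp ((c - ln N) / 2 + eps).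
  have -> : / N = exp (- ln N) by rewrite exp_Ropp exp_ln.
  by rewrite -!exp_plus; congr exp; field.
have ec := exp_pos (- c); have en := exp_pos ((c - ln N) / 2 + eps).
apply: (Rle_trans _ (4 * Q * (exp (- c) * exp ((c - ln N) / 2 + eps)))).
  rewrite -split_exp /Rdiv Rinv_mult; apply: Rmult_le_compat_l; first lra.
  by apply: Rmult_le_compat_l => //; apply/Rlt_le/Rinv_0_lt_compat.
have : 4 * Q * exp ((c - ln N) / 2 + eps) <= 4 * Q * (b / (8 * Q)) by apply: Rmult_le_compat_l; lra.
have -> : 4 * Q * (b / (8 * Q)) = b / 2 by field; lra.
nra.
Qed.

Lemma cutoff_second_term N c b eps P :
  0 < N -> 0 < b -> 0 <= eps -> eps <= 1 / 4 -> eps <= b / 64 ->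
  0 < P -> / P <= exp ((ln N - c) / 2 + eps) ->
  8 / (N * P ^ 2) <= (8 + b / 2) * exp (- c).
Proof.
move=> N_gt0 b_gt0 eps_ge0 eps_le1 eps_le2 P_gt0 invP.
have invP2 : / P ^ 2 <= exp (ln N - c + 2 * eps).
  have -> : ln N - c + 2 * eps = INR 2 * ((ln N - c) / 2 + eps) by rewrite /=; field.
  rewrite exp_mulINR -pow_inv; apply: pow_incr; split => //.
  by apply/Rlt_le/Rinv_0_lt_compat.
have exp2 : exp (2 * eps) <= 1 + 2 * (2 * eps) by apply: exp_le_1_add_2x; lra.
have split_exp : / N * exp (ln N - c + 2 * eps) = exp (- c) * exp (2 * eps).
  have -> : / N = exp (- ln N) by rewrite exp_Ropp exp_ln.
  by rewrite -!exp_plus; congr exp; ring.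
have ec := exp_pos (- c).
apply: (Rle_trans _ (8 * (exp (- c) * exp (2 * eps)))).
  rewrite -split_exp /Rdiv Rinv_mult; apply: Rmult_le_compat_l; first lra.
  by apply: Rmult_le_compat_l => //; apply/Rlt_le/Rinv_0_lt_compat.
nra.
Qed.

Lemma cutoff_bound Q N c c0 b eps P :
  2 <= Q -> 0 < N -> 0 < b -> c <= c0 -> 0 <= eps <= Rmin (1 / 4) (b / 64) ->
  2 * ln (8 * Q / b) + c0 + 1 <= ln N -> 0 < P -> / P <= exp ((ln N - c) / 2 + eps) ->
  1 - (4 * Q + b) * exp (- c) <= 1 - 4 * Q / (N * P) - 8 / (N * P ^ 2).
Proof.
move=> Q2 N_gt0 b_gt0 c_le [eps_ge0 eps_le] LN P_gt0 invP.
have [eps_le1 eps_le2] : eps <= 1 / 4 /\ eps <= b / 64.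
  by split; apply: Rle_trans eps_le _; [apply: Rmin_l | apply: Rmin_r].
have := cutoff_first_term (c0 := c0) (eps := eps) _ N_gt0 b_gt0 c_le _ LN P_gt0 invP.
have := cutoff_second_term N_gt0 b_gt0 eps_ge0 eps_le1 eps_le2 P_gt0 invP.
have := exp_pos (- c); move=> ec second first.
have := first ltac:(lra) ltac:(lra); nra.
Qed.

Lemma eventually_cutoff_regime Q L0 delta : 0 < Q -> 0 < delta ->
  exists T, forall N, T <= N -> 2 * Q <= N /\ L0 <= ln N /\ Q * ln N / N <= delta.
Proof.
move=> Q_gt0 d_gt0; exists (Rmax (Rmax (2 * Q) (exp L0)) ((2 * Q / delta) ^ 2)) => N NT.
have [[N2Q NL0] Nsq] : (2 * Q <= N /\ exp L0 <= N) /\ (2 * Q / delta) ^ 2 <= N.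
  by split; [split|]; apply: Rle_trans NT; rewrite ?Rmax_Rle; auto using Rle_refl.
have N_gt0 : 0 < N by lra.
split=> //; split.
  by apply: Rnot_lt_le => /exp_increasing; rewrite exp_ln //; lra.
have s_ge : 2 * Q / delta <= sqrt N.
  rewrite -(sqrt_pow2 (2 * Q / delta)); first exact: sqrt_le_1_alt.
  by apply/Rlt_le/Rdiv_lt_0_compat; lra.
have lnN := ln_le_2sqrt N_gt0.
set s := sqrt N in s_ge lnN; have s_gt0 : 0 < s := sqrt_lt_R0 _ N_gt0.
have sN : s * s = N by apply: sqrt_sqrt; lra.
have le_2s : Q * ln N / N <= Q * (2 * s) / N.
  by apply: Rmult_le_compat_r; [apply/Rlt_le/Rinv_0_lt_compat | apply: Rmult_le_compat_l]; lra.
rewrite (_ : Q * (2 * s) / N = 2 * Q / s) in le_2s; last by rewrite -sN; field; lra.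
have Q_le : 2 * Q <= delta * s.
  have := Rmult_le_compat_l _ _ _ (Rlt_le _ _ d_gt0) s_ge.
  by have -> : delta * (2 * Q / delta) = 2 * Q by field; lra.
have : 2 * Q / s <= delta.
  by apply: (Rmult_le_reg_r s) => //; rewrite /Rdiv Rmult_assoc Rinv_l; lra.
lra.
Qed.

Lemma tv_cutoff_ge (q n : nat) (q_gt1 : (1 < q)%nat) (n_gt0 : (0 < n)%nat) k c c0 b :
  let N := INR (n * (q - 1)) in
  0 < b -> 0 <= c -> c <= Rmin c0 (ln N) -> INR k = N / (2 * INR q) * (ln N - c) ->
  2 * INR q <= N -> 2 * ln (8 * INR q / b) + c0 + 1 <= ln N ->
  INR q * ln N / N <= Rmin (1 / 4) (b / 64) ->
  1 - (4 * INR q + b) * exp (- c) <= tv (nu (ltnW q_gt1) k) (@unif q n).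
Proof.
move=> N b_gt0 c_ge0 c_le k_def QN LN lnN_le.
have Q2 := Q_ge2 q_gt1; have N_gt0 : 0 < N := N_gt0 q_gt1 n_gt0.
have [QN0 QN1] := Q_div_N_bounds q_gt1 n_gt0 QN; rewrite -/N in QN0 QN1.
have c_lnN : c <= ln N := Rle_trans _ _ _ c_le (Rmin_r _ _).
set eps := (ln N - c) * INR q / N.
have eps_bounds : 0 <= eps <= Rmin (1 / 4) (b / 64).
  split; first by apply: Rmult_le_pos; [apply: Rmult_le_pos|apply/Rlt_le/Rinv_0_lt_compat]; lra.
  apply: Rle_trans lnN_le; rewrite /eps /Rdiv (Rmult_comm (ln N - c)).
  apply: Rmult_le_compat_r; first by apply/Rlt_le/Rinv_0_lt_compat.
  by apply: Rmult_le_compat_l; lra.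
have P_gt0 : 0 < (1 - INR q / N) ^ k by apply: pow_lt; lra.
have P_ge : exp (- ((ln N - c) / 2 + eps)) <= (1 - INR q / N) ^ k.
  have -> : (ln N - c) / 2 + eps = INR k * (INR q / N + 2 * (INR q / N) ^ 2).
    by rewrite k_def /eps; field; lra.
  by apply: pow_1_sub_ge_exp; lra.
apply: Rle_trans (tv_walk_ge q_gt1 n_gt0 k QN).
apply: (cutoff_bound (eps := eps)) => //.
- exact: Rle_trans c_le (Rmin_l _ _).
- exact: LN.
- exact: inv_le_exp P_ge.
Qed.

Close Scope R_scope.

Theorem theorem1p3 (q : nat) (hq : (2 <= q)%N) (c0 : R) (hc0 : (0 < c0)%R) :
  forall b : R, (0 < b)%R ->
  exists n0 : nat, (0 < n0)%N /\
    forall (n k : nat) (c : R), (n0 <= n)%N ->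
      (0 <= c)%R -> (c <= Rmin c0 (ln (INR (n * (q - 1)))))%R ->
      INR k = (INR (n * (q - 1)) / (2 * INR q) * (ln (INR (n * (q - 1))) - c))%R ->
      (1 - (4 * INR q + b) * exp (- c) <= @tv q n (@nu q n (ltnW hq) k) (@unif q n))%R.
Proof.
move=> b b_gt0; have Q2 := Q_ge2 hq.
have delta_gt0 : (0 < Rmin (1 / 4) (b / 64))%R by apply: Rmin_glb_lt; lra.
have [T regime] := eventually_cutoff_regime (2 * ln (8 * INR q / b) + c0 + 1)
  (ltac:(lra) : (0 < INR q)%R) delta_gt0.
have [n0 n0_gt] := INR_unbounded T.
exists n0.+1; split=> // n k c n_ge c_ge0 c_le k_def.
have n_gt0 : (0 < n)%N by apply: leq_trans n_ge.
have N_ge : (T <= INR (n * (q - 1)))%R.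
  apply/Rlt_le/(Rlt_le_trans _ _ _ n0_gt)/le_INR/leP.
  by apply: leq_trans (ltnW n_ge) _; apply: leq_pmulr; rewrite subn_gt0.
have [QN [LN lnN_le]] := regime _ N_ge.
exact: (tv_cutoff_ge hq n_gt0 b_gt0 c_ge0 c_le k_def QN LN lnN_le).
Qed.
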